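(* Let $d$ and $k$ be positive integers with $k\le d$. The number of $312$-avoiding affine permutations in $\widetilde{\mathfrak S}_d$ that have exactly $k$ cut points modulo $d$ is $\binom{2d-k-1}{d-1}$.
   Context: An affine permutation $\pi\in\widetilde{\mathfrak S}_d$ is a bijection $\pi:\mathbb Z\to\mathbb Z$ such that $\pi(i+d)=\pi(i)+d$ for all $i\in\mathbb Z$ and $\sum_{i=0}^{d-1}(\pi(i)-i)=0$. It is $312$-avoiding if there are no integers $i<j<k$ with $\pi(j)<\pi(k)<\pi(i)$. A cut point of $\pi$ is an integer $j$ such that $\pi(i)<\pi(k)$ for all integers $i\le j<k$. If $j$ is a cut point then so is every integer congruent to $j$ modulo $d$; ''number of cut points modulo $d$'' means the number of residue classes modulo $d$ consisting of cut points. *)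

From mathcomp Require Import all_boot all_order all_algebra.
Set Implicit Arguments. Unset Strict Implicit. Unset Printing Implicit Defensive.
Import Order.TTheory GRing.Theory Num.Theory.
Local Open Scope ring_scope.

Definition is_affine_perm (d : nat) (p : int -> int) : Prop :=
  bijective p /\
  (forall i : int, p (i + d%:Z) = p i + d%:Z) /\
  \sum_(i < d) (p (Posz i) - Posz i) = 0.

Definition avoids312 (p : int -> int) : Prop :=
  ~ exists i j k : int, [/\ i < j, j < k, p j < p k & p k < p i].

Definition is_cut_point (p : int -> int) (j : int) : Prop :=
  forall i k : int, i <= j -> j < k -> p i < p k.

Definition has_cut_classes (d : nat) (p : int -> int) (k : nat) : Prop :=
  exists S : {set 'I_d}, #|S| = k /\
    forall r : 'I_d, r \in S <-> is_cut_point p (Posz r).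

(* window notation [p(0); ...; p(d-1)], which determines an affine permutation *)
Definition window (d : nat) (p : int -> int) : seq int :=
  [seq p (Posz i) | i <- iota 0 d].

From mathcomp Require Import all_boot all_order all_algebra zify.
Set Implicit Arguments. Unset Strict Implicit. Unset Printing Implicit Defensive.
Import Order.TTheory GRing.Theory Num.Theory.

(* Let [p] be an affine permutation of period [d] and [M j] the maximum of [p]
   over [i <= j]. Values of [p] on [d] consecutive positions are pairwise
   incongruent modulo [d] and add up to the sum of the positions; comparing
   such sums shows [j <= M j], with equality exactly at the cut points. The
   gap [g j := M j - j] then follows the Lindley recursion
   [g (j + 1) = (g j - 1)_+ + e j] with [e j >= 0], and the increments
   [e 0, ..., e (d - 1)] form a composition of [d - k] into [d] parts when [p]
   has [k] cut classes. This cut code is a bijection onto such compositions: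
   - a periodic Lindley trajectory that vanishes somewhere is determined by its
     increments, hence the code determines [M]; and a 312-avoiding affine
     permutation with a cut point is determined by [M], since at the first
     difference the prefix maximum and the preimage of the larger value would
     form a 312 pattern;
   - conversely, a composition has a periodic trajectory with [k] zeros; cut
     after a zero and fill each block greedily, giving every position the
     largest free value below the prescribed prefix maximum.
   Compositions of [d - k] into [d] parts are counted by ['C(2d - k - 1, d - 1)]. *)

(** * Compositions *)

Definition incr_head (t : seq nat) : seq nat :=
  if t is a :: t' then a.+1 :: t' else [::].

(* Pascal's rule: the first part is either positive or [0]. *)
Fixpoint compositions (m : nat) : nat -> seq (seq nat) :=
  if m is m'.+1 then
    fix comps_m n :=
      if n is n'.+1 then
        map incr_head (comps_m n') ++ map (cons 0) (compositions m' n'.+1)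
      else [:: nseq m'.+1 0]
  else fun n => if n is 0 then [:: [::]] else [::].

Lemma compositionsSS m n :
  compositions m.+1 n.+1 =
  map incr_head (compositions m.+1 n) ++ map (cons 0) (compositions m n.+1).
Proof. by []. Qed.

Lemma sumn_eq0_nseq (t : seq nat) : sumn t = 0 -> t = nseq (size t) 0.
Proof. by elim: t => //= a t IHt /eqP; rewrite addn_eq0 => /andP[/eqP-> /eqP/IHt {1}->]. Qed.

Lemma mem_compositions m n t :
  (t \in compositions m n) = (size t == m) && (sumn t == n).
Proof.
elim: m n t => [|m IHm] n t.
  by case: n => [|n]; case: t.
elim: n t => [|n IHn] t.
  rewrite inE; case: t => [|a t] //=; rewrite eqSS.
  apply/eqP/andP => [[-> ->]|[/eqP <- /eqP]]; first by rewrite size_nseq sumn_nseq.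
  by move/eqP; rewrite addn_eq0 => /andP[/eqP-> /eqP/sumn_eq0_nseq {1}->].
rewrite compositionsSS mem_cat; case: t => [|a t] /=.
  by apply/negP; case/orP => /mapP[[|b u] //]; rewrite IHn.
rewrite eqSS; case: a => [|a].
  rewrite add0n; apply/orP/idP => [[]|size_sum].
  - by case/mapP => [[|b u]].
  - by case/mapP => u + [->]; rewrite IHm.
  - by right; apply/mapP; exists t; rewrite // IHm.
rewrite addSn eqSS; apply/orP/idP => [[]|size_sum].
- by case/mapP => [[|b u]] // + [-> ->]; rewrite IHn /=.
- by case/mapP.
- by left; apply/mapP; exists (a :: t); rewrite // IHn.
Qed.

Lemma compositions_uniq m n : uniq (compositions m n).
Proof.
elim: m n => [|m IHm] n; first by case: n.
elim: n => [|n IHn] //; rewrite compositionsSS cat_uniq.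
rewrite map_inj_in_uniq ?map_inj_uniq ?IHn ?IHm ?andbT; last 2 first.
- by move=> u v [].
- by move=> [|a u] [|b v]; rewrite !mem_compositions // => _ _ [-> ->].
by apply/hasPn => _ /mapP[u _ ->]; apply/mapP => -[[|b v]].
Qed.

Lemma size_compositions m n : size (compositions m.+1 n) = 'C(n + m, n).
Proof.
elim: m n => [|m IHm] n.
  by elim: n => [|n IHn] //; rewrite compositionsSS size_cat size_map IHn !addn0 !binn.
elim: n => [|n IHn]; first by rewrite bin0.
by rewrite compositionsSS size_cat !size_map IHn IHm !addSn !addnS binS addnC.
Qed.

Lemma enum_by_encoding (T U : eqType) (P : T -> Prop) (enc : T -> U) (codes : seq U) :
  uniq codes ->
  (forall t, P t -> enc t \in codes) ->
  (forall u, u \in codes -> exists2 t, P t & enc t = u) ->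
  (forall t t', P t -> P t' -> enc t = enc t' -> t = t') ->
  exists s : seq T, [/\ uniq s, size s = size codes & forall t, t \in s <-> P t].
Proof.
move=> codes_uniq enc_codes enc_onto enc_inj.
elim: codes P codes_uniq enc_codes enc_onto enc_inj => [|u codes IHcodes] P.
  by move=> _ enc_nil _ _; exists [::]; split => // t; split => // /enc_nil.
rewrite cons_uniq => /andP[u_new codes_uniq] enc_codes enc_onto enc_inj.
have [t0 Pt0 enc_t0] := enc_onto u (mem_head u codes).
have [|u' u'_codes||s [s_uniq size_s mem_s]] :=
  IHcodes (fun t => P t /\ enc t != u) codes_uniq.
- by move=> t [/enc_codes]; rewrite inE => /orP[->|].
- have [t Pt enc_t] := enc_onto u' (mem_behead (s := u :: codes) u'_codes).
  by exists t; rewrite ?enc_t //; split=> //; apply: contraNneq u_new => <-.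
- by move=> t t' [Pt _] [Pt' _]; apply: enc_inj.
exists (t0 :: s); split; rewrite /= ?size_s //.
  by rewrite s_uniq andbT; apply/negP => /mem_s[_]; rewrite enc_t0 eqxx.
move=> t; rewrite inE; split => [/orP[/eqP->|/mem_s[]] //|Pt].
have [enc_t|enc_t] := eqVneq (enc t) u.
  by rewrite (enc_inj t t0) ?eqxx ?enc_t0.
by apply/orP; right; apply/mem_s.
Qed.

(** * The Lindley recursion *)

Lemma monotone_fixpoint (h : nat -> nat) :
  {homo h : x y / x <= y} -> forall m, h m < m -> exists x, h x = x.
Proof.
move=> h_mono; elim=> // m IHm lt_hm_m1.
have [/IHm//|le_m_hm] := ltnP (h m) m.
by exists m; have := h_mono m m.+1 (leqnSn m); lia.
Qed.

Section Lindley.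
Variable r : seq nat.

Fixpoint lindley (x j : nat) : nat :=
  if j is j'.+1 then (lindley x j').-1 + nth 0 r j' else x.

Definition lindley_zeros (x n : nat) : nat := \sum_(0 <= j < n) (lindley x j == 0).

Lemma leq_lindley x y j : x <= y -> lindley x j <= lindley y j.
Proof. by move=> le_xy; elim: j => //= j IHj; rewrite leq_add2r; lia. Qed.

Lemma lindley_balance x n :
  lindley x n + n = x + \sum_(0 <= j < n) nth 0 r j + lindley_zeros x n.
Proof.
rewrite /lindley_zeros; elim: n => [|n IHn]; first by rewrite !big_geq // !addn0.
by rewrite !big_nat_recr //=; move: IHn; case: (lindley x n) => [|t] /=; lia.
Qed.

Lemma lindley_ge x j : x - j <= lindley x j.
Proof. by elim: j => [|j IHj] /=; lia. Qed.

(* Two periodic trajectories that both vanish somewhere coincide: the larger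
   one dominates the smaller and they merge at a zero of the larger. *)
Lemma lindley_periodic_uniq x y n :
  lindley x n = x -> lindley y n = y ->
  (exists2 j, j <= n & lindley x j = 0) -> (exists2 j, j <= n & lindley y j = 0) ->
  x = y.
Proof.
wlog le_xy : x y / x <= y.
  move=> wlog_le per_x per_y zero_x zero_y.
  have [le_xy|/ltnW le_yx] := leqP x y; first exact: wlog_le.
  exact/esym/wlog_le.
move=> per_x per_y _ [j0 le_j0n zero_y].
have merged i : lindley x (j0 + i) = lindley y (j0 + i).
  elim: i => [|i IHi]; last by rewrite addnS /= IHi.
  by have := leq_lindley j0 le_xy; rewrite addn0; lia.
by rewrite -per_x -per_y -(subnKC le_j0n) merged.
Qed.

Lemma lindley_periodic_exists n k :
  size r = n -> sumn r = n - k -> 0 < k <= n ->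
  exists x, lindley x n = x /\ lindley_zeros x n = k.
Proof.
move=> size_r sum_r /andP[k_gt0 le_kn].
have sum_nth : \sum_(0 <= j < n) nth 0 r j = n - k.
  by rewrite -sum_r -size_r sumnE [in RHS](big_nth 0).
suff [x per_x] : exists x, lindley x n = x.
  by exists x; split=> //; have := lindley_balance x n; rewrite sum_nth per_x; lia.
have no_zeros : lindley_zeros n n = 0.
  rewrite /lindley_zeros big_nat_cond big1 // => j /andP[/andP[_ lt_jn] _].
  by have := lindley_ge n j; case: (lindley n j) => //; lia.
apply: (@monotone_fixpoint (lindley^~ n) (fun x y => @leq_lindley x y n) n).
by have := lindley_balance n n; rewrite sum_nth no_zeros; lia.
Qed.

End Lindley.

Definition lindley_increments (g : nat -> nat) (n : nat) : seq nat :=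
  [seq g j.+1 - (g j).-1 | j <- iota 0 n].

Lemma lindley_incrementsK (g : nat -> nat) n :
  (forall j, j < n -> (g j).-1 <= g j.+1) ->
  forall j, j <= n -> lindley (lindley_increments g n) (g 0) j = g j.
Proof.
move=> g_step; elim=> [|j IHj] // lt_jn /=.
rewrite IHj 1?ltnW // (nth_map 0) ?size_iota // nth_iota // add0n.
by rewrite subnKC ?g_step.
Qed.

(** * Greedy permutations *)

Section Greedy.
Variable f : nat -> nat.

Definition greedy_pick (n : nat) (s : seq nat) : nat :=
  \max_(v < (f n).+1 | (v : nat) \notin s) v.

Fixpoint greedy_seq (n : nat) : seq nat :=
  if n is m.+1 then rcons (greedy_seq m) (greedy_pick m (greedy_seq m)) else [::].

Definition greedy (x : nat) : nat := greedy_pick x (greedy_seq x).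

Lemma greedy_seqE n : greedy_seq n = mkseq greedy n.
Proof.
elim: n => [|n IHn] //=.
by rewrite IHn /mkseq -addn1 iotaD map_cat /= -cats1 /greedy IHn.
Qed.

Lemma greedy_pickP n s : size s <= f n ->
  [/\ greedy_pick n s \notin s, greedy_pick n s <= f n &
      forall v, v <= f n -> v \notin s -> v <= greedy_pick n s].
Proof.
move=> size_s; rewrite /greedy_pick.
have [v0 v0_free] : exists v : 'I_(f n).+1, (v : nat) \notin s.
  apply/existsP; apply: contraLR size_s => /existsPn all_taken; rewrite -ltnNge.
  rewrite -[(f n).+1](size_iota 0) uniq_leq_size ?iota_uniq // => v.
  by rewrite mem_iota /= => lt_v; have := all_taken (Ordinal lt_v); rewrite negbK.
have [v v_free eq_max] := @eq_bigmax_cond _ (fun v : 'I_(f n).+1 => (v : nat) \notin s)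
  (@nat_of_ord _) ltac:(by apply/card_gt0P; exists v0).
split; [by rewrite eq_max | by rewrite eq_max -ltnS | move=> u le_u u_free].
exact: (@leq_bigmax_cond _ (fun v : 'I_(f n).+1 => (v : nat) \notin s)
  (fun v => nat_of_ord v) (Ordinal (le_u : u < (f n).+1)) u_free).
Qed.

Hypothesis f_ge : forall x, x <= f x.
Hypothesis f_mono : {homo f : x y / x <= y}.

Lemma greedyP x :
  [/\ greedy x \notin mkseq greedy x, greedy x <= f x &
      forall v, v <= f x -> v \notin mkseq greedy x -> v <= greedy x].
Proof. by rewrite -greedy_seqE; apply: greedy_pickP; rewrite greedy_seqE size_mkseq. Qed.

Lemma greedy_le x : greedy x <= f x.
Proof. by case: (greedyP x). Qed.

Lemma greedy_inj : injective greedy.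
Proof.
suff fresh y x : y < x -> greedy y != greedy x.
  by move=> x y eq_g; case: (ltngtP x y) => // /fresh; rewrite eq_g eqxx.
move=> lt_yx; case: (greedyP x) => + _ _; apply: contraNneq => <-.
by rewrite map_f // mem_iota.
Qed.

Lemma greedy_maximal x v :
  v <= f x -> (forall y, y < x -> greedy y != v) -> v <= greedy x.
Proof.
move=> le_v v_free; case: (greedyP x) => _ _; apply=> //.
by apply/mapP => -[y]; rewrite mem_iota => /andP[_ /v_free/eqP neq_v] /esym.
Qed.

Lemma greedy_prefix_max x :
  (forall y, y <= x -> greedy y <= f x) /\ exists2 y, y <= x & greedy y = f x.
Proof.
split=> [y le_yx|]; first exact: leq_trans (greedy_le y) (f_mono le_yx).
elim: x => [|x [y le_yx gy_eq]].
  by exists 0 => //; apply/eqP; rewrite eqn_leq greedy_le greedy_maximal.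
have [lt_fx|eq_fx] : f x < f x.+1 \/ f x = f x.+1 by have := f_mono (leqnSn x); lia.
  exists x.+1 => //; apply/eqP; rewrite eqn_leq greedy_le greedy_maximal // => z lt_z.
  by apply: contraTneq lt_fx => <-; rewrite -leqNgt (leq_trans (greedy_le z)) ?f_mono.
by exists y; [apply: leqW | rewrite gy_eq].
Qed.

(* A value [greedy e] below [greedy a] was still free when [greedy b] was
   picked, which prevents [greedy b < greedy e < greedy a] for [a < b < e]. *)
Lemma greedy_no312 a b e :
  a < b -> b < e -> ~ (greedy b < greedy e /\ greedy e < greedy a).
Proof.
move=> lt_ab lt_be [lt_be' lt_ea]; suff : greedy e <= greedy b by rewrite leqNgt lt_be'.
apply: greedy_maximal => [|y lt_yb].
  exact: leq_trans (ltnW lt_ea) (leq_trans (greedy_le a) (f_mono (ltnW lt_ab))).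
by rewrite (inj_eq greedy_inj); apply: contraTneq (ltn_trans lt_yb lt_be) => ->; rewrite ltnn.
Qed.

Variable d : nat.
Hypothesis f_lt : forall x, x < d -> f x < d.

Lemma greedy_lt x : x < d -> greedy x < d.
Proof. by move=> lt_xd; exact: leq_ltn_trans (greedy_le x) (f_lt lt_xd). Qed.

Lemma greedy_perm : perm_eq (mkseq greedy d) (iota 0 d).
Proof.
have uniq_g : uniq (mkseq greedy d) by rewrite map_inj_uniq ?iota_uniq //; exact: greedy_inj.
have sub_g : {subset mkseq greedy d <= iota 0 d}.
  by move=> v /mapP[x]; rewrite mem_iota => /andP[_ lt_xd] ->; rewrite mem_iota greedy_lt.
apply: uniq_perm; rewrite ?iota_uniq //.
by have [] := uniq_min_size uniq_g sub_g; rewrite ?size_mkseq ?size_iota.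
Qed.

End Greedy.

Local Open Scope ring_scope.

(** * Residues modulo the period *)

Lemma quasi_periodicZ (d : nat) (f : int -> int) (c : int) :
  (forall i, f (i + d%:Z) = f i + c) -> forall i (t : int), f (i + t * d%:Z) = f i + t * c.
Proof.
move=> f_shift i t; wlog t_ge0 : i t / 0 <= t.
  move=> wlog_ge0; have [/wlog_ge0//|/ltW t_le0] := lerP 0 t.
  by have := wlog_ge0 (i + t * d%:Z) (- t); rewrite oppr_ge0 !mulNr addrK => /(_ t_le0); lia.
case: t t_ge0 => // n _; elim: n => [|n IHn]; first by rewrite !mul0r !addr0.
have -> : i + n.+1%:Z * d%:Z = (i + n%:Z * d%:Z) + d%:Z by lia.
by rewrite f_shift IHn; lia.
Qed.

Section Residues.
Variable d : nat.
Hypothesis d_gt0 : (0 < d)%N.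

Definition residue (i : int) : 'I_d := Ordinal (ltac:(lia) : (absz (i %% d)%Z < d)%N).

Lemma residueE i : (residue i)%:Z = (i %% d)%Z.
Proof. by rewrite /=; lia. Qed.

Lemma residue_eq i i' : (residue i == residue i') = (d%:Z %| i - i')%Z.
Proof. by rewrite -eqz_mod_dvd -val_eqE /= -!residueE. Qed.

Lemma block_decomp b i : exists x (t : int), (x < d)%N /\ i = b + x%:Z + t * d%:Z.
Proof. by exists (absz ((i - b) %% d)%Z), ((i - b) %/ d)%Z; split; lia. Qed.

Lemma block_decomp_eq (x y : nat) (s t : int) : (x < d)%N -> (y < d)%N ->
  x%:Z + s * d%:Z = y%:Z + t * d%:Z -> x = y /\ s = t.
Proof.
move=> lt_xd lt_yd eq_xy; have diff : (s - t) * d%:Z = y%:Z - x%:Z by lia.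
have eq_st : s = t by nia.
by split=> //; move: eq_xy; rewrite eq_st; lia.
Qed.

Lemma block_index_le (x y : nat) (s t : int) : (x < d)%N -> (y < d)%N ->
  x%:Z + s * d%:Z <= y%:Z + t * d%:Z -> s <= t.
Proof. by move=> lt_xd lt_yd le_xy; rewrite leNgt; apply/negP => lt_ts; nia. Qed.

Lemma ord_dvd_eq (x y : 'I_d) : (d%:Z %| x%:Z - y%:Z)%Z -> x = y.
Proof.
case/dvdzP => q eq_q; apply: val_inj.
by case: (@block_decomp_eq x y 0 q (ltn_ord x) (ltn_ord y)) => //; lia.
Qed.

Lemma sum_shift_periodic (f : int -> int) :
  (forall i, f (i + d%:Z) = f i) -> forall a, \sum_(x < d) f (a + x%:Z) = \sum_(x < d) f x%:Z.
Proof.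
move=> f_per a.
have f_perZ i t : f (i + t * d%:Z) = f i.
  by rewrite (@quasi_periodicZ d f 0) ?mulr0 ?addr0 // => j; rewrite addr0.
have f_res i : f i = f (residue i) by rewrite residueE {1}(divz_eq i d) addrC f_perZ.
have res_inj : injective (fun x : 'I_d => residue (a + x%:Z)).
  by move=> x y /eqP; rewrite residue_eq opprD addrACA subrr add0r => /ord_dvd_eq.
by rewrite [RHS](reindex_inj res_inj); apply: eq_bigr => x _; rewrite f_res.
Qed.

(* Incongruent nonnegative integers dominate [0, 1, ..., d-1] once sorted. *)
Lemma sum_incongruent_ge (u : 'I_d -> int) :
  (forall x y, (d%:Z %| u x - u y)%Z -> x = y) -> (forall x, 0 <= u x) ->
  \sum_(x < d) x%:Z <= \sum_(x < d) u x /\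
  (\sum_(x < d) u x = \sum_(x < d) x%:Z -> forall x, u x < d%:Z).
Proof.
move=> u_incong u_ge0.
have res_inj : injective (fun x => residue (u x)).
  by move=> x y /eqP; rewrite residue_eq; exact: u_incong.
have res_le x : (residue (u x))%:Z <= u x.
  rewrite residueE {2}(divz_eq (u x) d) lerDr mulr_ge0 // divz_ge0 ?u_ge0 //; lia.
rewrite (reindex_inj res_inj); split; first by apply: ler_sum => x _.
move=> /eqP; rewrite -subr_eq0 -sumrB => /eqP sum0 x.
have gap_ge0 y : xpredT y -> 0 <= u y - (residue (u y))%:Z by rewrite subr_ge0.
have /(_ x isT)/eqP := psumr_eq0P gap_ge0 sum0.
by rewrite subr_eq0 => /eqP ->; rewrite ltz_nat.
Qed.
End Residues.

Lemma gauss_sumZ (d : nat) : (\sum_(x < d) x%:Z) * 2 = d%:Z * (d%:Z - 1).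
Proof. by elim: d => [|d IHd]; rewrite ?big_ord0 // big_ord_recr /= mulrDl IHd; lia. Qed.

(** * Prefix maxima and cut points of affine permutations *)

(* For an affine permutation, the maximum of [p] over [i <= j] is attained in
   the last [d] positions. *)
Definition prefix_max (d : nat) (p : int -> int) (j : int) : int :=
  \big[Num.max/p j]_(x < d) p (j - x%:Z).

Lemma prefix_max_attained (d : nat) (p : int -> int) j :
  exists2 i, i <= j & p i = prefix_max d p j.
Proof.
rewrite /prefix_max; elim/big_ind: _ => [|m m' [i le_ij <-] [i' le_i'j <-]|x _].
- by exists j.
- by case: (leP (p i) (p i')) => _; [exists i' | exists i].
- by exists (j - x%:Z) => //; rewrite gerDl oppr_le0.
Qed.

Section AffinePermutation.
Variables (d : nat) (p : int -> int).
Hypothesis d_gt0 : (0 < d)%N.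
Hypothesis p_aff : is_affine_perm d p.

Let p_inj : injective p := bij_inj p_aff.1.
Let p_per : forall i, p (i + d%:Z) = p i + d%:Z := p_aff.2.1.
Let p_sum0 : \sum_(i < d) (p (Posz i) - Posz i) = 0 := p_aff.2.2.

Lemma affine_perm_onto y : exists x, p x = y.
Proof. by case: p_aff.1 => g _ gK; exists (g y). Qed.

Lemma affine_permZ i (t : int) : p (i + t * d%:Z) = p i + t * d%:Z.
Proof. exact: quasi_periodicZ. Qed.

Lemma sum_window a : \sum_(x < d) p (a + x%:Z) = a * d%:Z + \sum_(x < d) x%:Z.
Proof.
have p_shift_per i : p (i + d%:Z) - (i + d%:Z) = p i - i by rewrite p_per; lia.
have := @sum_shift_periodic d d_gt0 (fun i => p i - i) p_shift_per a.
rewrite p_sum0 sumrB big_split /= sumr_const card_ord => /eqP; rewrite subr_eq0 => /eqP ->.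
by rewrite -mulr_natr natz.
Qed.

Lemma window_incongruent a (x y : 'I_d) :
  (d%:Z %| p (a + x%:Z) - p (a + y%:Z))%Z -> x = y.
Proof.
case/dvdzP => q eq_q; apply: (ord_dvd_eq d_gt0); apply/dvdzP; exists q.
have : p (a + x%:Z) = p (a + y%:Z + q * d%:Z) by rewrite affine_permZ; lia.
by move/p_inj; lia.
Qed.

Lemma prefix_max_ub i j : i <= j -> p i <= prefix_max d p j.
Proof.
move=> le_ij; set x := residue d_gt0 (j - i).
have -> : i = j - x%:Z + (- ((j - i) %/ d)%Z) * d%:Z by rewrite residueE; lia.
rewrite affine_permZ; apply: le_trans (le_bigmax _ _ x).
have : 0 <= ((j - i) %/ d)%Z by rewrite divz_ge0 ?subr_ge0 //; lia.
nia.
Qed.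

Lemma prefix_max_eq j m :
  (forall i, i <= j -> p i <= m) -> (exists2 i, i <= j & p i = m) -> prefix_max d p j = m.
Proof.
move=> ub [i le_ij eq_m]; subst m; apply/le_anti; rewrite prefix_max_ub // andbT.
by have [i' le_i'j <-] := prefix_max_attained d p j; apply: ub.
Qed.

Lemma prefix_maxZ j (t : int) : prefix_max d p (j + t * d%:Z) = prefix_max d p j + t * d%:Z.
Proof.
apply: prefix_max_eq => [i le_ij|].
  have -> : i = i - t * d%:Z + t * d%:Z by rewrite subrK.
  by rewrite affine_permZ lerD2r prefix_max_ub // lerBlDr.
have [i le_ij <-] := prefix_max_attained d p j.
by exists (i + t * d%:Z); rewrite ?affine_permZ ?lerD2r.
Qed.

Lemma le_prefix_max i j : i <= j -> prefix_max d p i <= prefix_max d p j.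
Proof.
move=> le_ij; have [i' le_i'i <-] := prefix_max_attained d p i.
exact/prefix_max_ub/(le_trans le_i'i).
Qed.

(* By [sum_incongruent_ge]: the values on the window are pairwise incongruent
   ([window_incongruent]) and add up to the sum of the positions ([sum_window]). *)
Lemma window_le a m : (forall x : 'I_d, p (a + x%:Z) <= m) ->
  a + d%:Z - 1 <= m /\ (m = a + d%:Z - 1 -> forall x : 'I_d, m - d%:Z < p (a + x%:Z)).
Proof.
move=> le_m; pose u (x : 'I_d) := m - p (a + x%:Z).
have u_incong x y : (d%:Z %| u x - u y)%Z -> x = y.
  move=> dvd_u; apply/esym/(window_incongruent (a := a)).
  by have -> : p (a + y%:Z) - p (a + x%:Z) = u x - u y by rewrite /u; lia.
have u_ge0 x : 0 <= u x by rewrite subr_ge0.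
have [] := sum_incongruent_ge d_gt0 u_incong u_ge0.
rewrite /u sumrB sumr_const card_ord sum_window -mulr_natr natz => le_sum eq_lt.
have gauss := gauss_sumZ d; split=> [|eq_m x]; first by nia.
by have := eq_lt ltac:(rewrite eq_m; nia) x; rewrite /u; lia.
Qed.

Lemma window_ge a m : (forall x : 'I_d, m <= p (a + x%:Z)) -> m <= a.
Proof.
move=> ge_m; pose u (x : 'I_d) := p (a + x%:Z) - m.
have u_incong x y : (d%:Z %| u x - u y)%Z -> x = y.
  move=> dvd_u; apply: (window_incongruent (a := a)).
  by have -> : p (a + x%:Z) - p (a + y%:Z) = u x - u y by rewrite /u; lia.
have u_ge0 x : 0 <= u x by rewrite subr_ge0.
have [] := sum_incongruent_ge d_gt0 u_incong u_ge0.
by rewrite /u sumrB sumr_const card_ord sum_window -mulr_natr natz; nia.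
Qed.

Lemma prefix_max_ge j : j <= prefix_max d p j.
Proof.
have [] := @window_le (j - d%:Z + 1) (prefix_max d p j); last by lia.
by move=> x; apply: prefix_max_ub; have := ltn_ord x; lia.
Qed.

Lemma cut_pointE j : is_cut_point p j <-> prefix_max d p j = j.
Proof.
split=> [cut_j|Mj i k le_ij lt_jk].
  apply/le_anti; rewrite prefix_max_ge andbT -(lerD2r 1).
  have [i0 le_i0j <-] := prefix_max_attained d p j.
  apply: (@window_ge (j + 1)) => x.
  by have := cut_j i0 (j + 1 + x%:Z) le_i0j ltac:(lia); lia.
pose a := j - d%:Z + 1.
have [|_ /(_ ltac:(lia)) gt_window] := @window_le a j.
  by move=> x; rewrite -[X in _ <= X]Mj prefix_max_ub // /a; have := ltn_ord x; lia.
set x := residue d_gt0 (k - a); set t := ((k - a) %/ d)%Z.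
have k_eq : k = a + x%:Z + t * d%:Z by rewrite residueE /t; lia.
have t_ge1 : 1 <= t by move: k_eq; rewrite /a; have := ltn_ord x; nia.
have := gt_window x; have := prefix_max_ub le_ij; rewrite Mj k_eq affine_permZ; nia.
Qed.

Lemma cut_point_block c : is_cut_point p c -> forall i, (c < p i) = (c < i).
Proof.
move=> cut_c i; have Mc := (cut_pointE c).1 cut_c.
have [lt_ci|le_ic] := ltrP c i.
  by have [i0 le_i0c] := prefix_max_attained d p c; rewrite Mc => <-; exact: cut_c.
by apply/negbTE; rewrite -leNgt -[X in _ <= X]Mc prefix_max_ub.
Qed.
End AffinePermutation.

(** * 312-avoiding affine permutations are determined by their prefix maxima *)

Section Avoid312Uniqueness.
Variables (d : nat) (p q : int -> int) (c : int).
Hypothesis d_gt0 : (0 < d)%N.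
Hypotheses (p_aff : is_affine_perm d p) (q_aff : is_affine_perm d q).
Hypotheses (cut_p : is_cut_point p c) (cut_q : is_cut_point q c).

(* At the first position [j] after the common cut point [c] where [p] and [q]
   differ, [p j < q j] would make [p] contain a 312 pattern, whose "3" is the
   prefix maximum at [j] and whose "2" is the preimage of [q j] under [p]. *)
Lemma first_difference_not_lt j :
  avoids312 p -> c < j -> (forall i, c < i < j -> p i = q i) ->
  prefix_max d p j = prefix_max d q j -> ~ p j < q j.
Proof.
move=> avoid_p lt_cj eq_before eq_max lt_pq.
have [x px_qj] := affine_perm_onto p_aff (q j).
have lt_cx : c < x.
  by rewrite -(cut_point_block d_gt0 p_aff cut_p) px_qj (cut_point_block d_gt0 q_aff cut_q).
have lt_jx : j < x.
  case: (ltrgtP x j) => [lt_xj|//|eq_xj]; last by move: lt_pq; rewrite -px_qj eq_xj ltxx.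
  have : q x = q j by rewrite -eq_before ?lt_cx.
  by move/(bij_inj q_aff.1) => eq_xj; move: lt_xj; rewrite eq_xj ltxx.
have [h le_hj ph_max] := prefix_max_attained d p j.
have le_qj_max : q j <= p h by rewrite ph_max eq_max (prefix_max_ub d_gt0 q_aff).
have lt_px_ph : p x < p h.
  rewrite lt_neqAle px_qj le_qj_max andbT -px_qj; apply/eqP => /(bij_inj p_aff.1) eq_xh.
  by move: le_hj; rewrite -eq_xh leNgt lt_jx.
apply: avoid_p; exists h, j, x; split; rewrite ?px_qj //.
- rewrite lt_neqAle le_hj andbT; apply: contraTneq lt_px_ph => ->.
  by rewrite -leNgt px_qj (ltW lt_pq).
- by rewrite -px_qj.
Qed.
End Avoid312Uniqueness.

Lemma avoids312_eq_of_prefix_max d (p q : int -> int) c :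
  (0 < d)%N -> is_affine_perm d p -> is_affine_perm d q ->
  avoids312 p -> avoids312 q -> is_cut_point p c ->
  (forall j, prefix_max d p j = prefix_max d q j) -> p =1 q.
Proof.
move=> d_gt0 p_aff q_aff avoid_p avoid_q cut_p eq_max.
have cut_q : is_cut_point q c.
  by apply/(cut_pointE d_gt0 q_aff); rewrite -eq_max; apply/(cut_pointE d_gt0 p_aff).
have eq_after (n : nat) j : c < j <= c + n%:Z -> p j = q j.
  elim: n j => [|n IHn] j /andP[lt_cj le_j]; first by move: le_j; rewrite addr0 leNgt lt_cj.
  have [le_jn|lt_nj] := lerP j (c + n%:Z); first by rewrite IHn ?lt_cj.
  have eq_before i : c < i < j -> p i = q i.
    by case/andP=> lt_ci lt_ij; apply: IHn; rewrite lt_ci /=; move: lt_ij le_j; lia.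
  case: (ltrgtP (p j) (q j)) => // [lt_pq|lt_qp].
    by case: (first_difference_not_lt d_gt0 p_aff q_aff cut_p cut_q avoid_p lt_cj
                                      eq_before (eq_max j)).
  have eq_before' i : c < i < j -> q i = p i by move/eq_before.
  by case: (first_difference_not_lt d_gt0 q_aff p_aff cut_q cut_p avoid_q lt_cj
                                    eq_before' (esym (eq_max j))).
move=> i; pose t : int := (absz (c - i)%R).+1.
have shifted : c < i + t * d%:Z <= c + (absz (i + t * d%:Z - c)%R)%:Z.
  rewrite /t; apply/andP; split; nia.
apply: (@addIr _ (t * d%:Z)).
by rewrite -(affine_permZ p_aff) -(affine_permZ q_aff) (eq_after _ _ shifted).
Qed.

(** * Block permutations *)

Section BlockPermutation.
Variables (d : nat) (b : int) (sigma : nat -> nat).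
Hypothesis d_gt0 : (0 < d)%N.
Hypothesis sigma_perm : perm_eq (mkseq sigma d) (iota 0 d).

(* The affine permutation acting as [sigma] on each block
   [b + t * d, ..., b + t * d + d - 1]. *)
Definition block_perm (i : int) : int :=
  b + (sigma (absz ((i - b) %% d)%Z))%:Z + ((i - b) %/ d)%Z * d%:Z.

Lemma block_permE (x : nat) (t : int) : (x < d)%N ->
  block_perm (b + x%:Z + t * d%:Z) = b + (sigma x)%:Z + t * d%:Z.
Proof.
move=> lt_xd; rewrite /block_perm (_ : b + x%:Z + t * d%:Z - b = x%:Z + t * d%:Z); last lia.
have -> : ((x%:Z + t * d%:Z) %% d)%Z = x%:Z.
  by rewrite addrC modzMDl modz_small //; lia.
have -> : ((x%:Z + t * d%:Z) %/ d)%Z = t.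
  by rewrite addrC divzMDl ?divz_small ?add0r //; lia.
by [].
Qed.

Lemma sigma_lt x : (x < d)%N -> (sigma x < d)%N.
Proof.
move=> lt_xd; have : sigma x \in mkseq sigma d by rewrite map_f // mem_iota.
by rewrite (perm_mem sigma_perm) mem_iota.
Qed.

Lemma sigma_inj x y : (x < d)%N -> (y < d)%N -> sigma x = sigma y -> x = y.
Proof.
move=> lt_xd lt_yd eq_sigma; have uniq_sigma : uniq (mkseq sigma d).
  by rewrite (perm_uniq sigma_perm) iota_uniq.
by apply/eqP; rewrite -(nth_uniq 0 _ _ uniq_sigma) ?size_mkseq // !nth_mkseq // eq_sigma.
Qed.

Lemma sigma_onto v : (v < d)%N -> exists2 x, (x < d)%N & sigma x = v.
Proof.
move=> lt_vd; have : v \in mkseq sigma d by rewrite (perm_mem sigma_perm) mem_iota.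
by case/mapP => x; rewrite mem_iota => lt_xd ->; exists x.
Qed.

Lemma block_perm_aff : is_affine_perm d block_perm.
Proof.
have per i : block_perm (i + d%:Z) = block_perm i + d%:Z.
  have [x [t [lt_xd ->]]] := block_decomp d_gt0 b i.
  have -> : b + x%:Z + t * d%:Z + d%:Z = b + x%:Z + (t + 1) * d%:Z by lia.
  by rewrite !block_permE //; lia.
have inj : injective block_perm.
  move=> i j; have [x [s [lt_xd ->]]] := block_decomp d_gt0 b i.
  have [y [t [lt_yd ->]]] := block_decomp d_gt0 b j; rewrite !block_permE // => eq_val.
  have [|/sigma_inj -> // ->] // :=
    block_decomp_eq d_gt0 (sigma_lt lt_xd) (sigma_lt lt_yd) (s := s) (t := t).
  by move: eq_val; lia.
have onto y : exists i, block_perm i == y.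
  have [v [t [lt_vd ->]]] := block_decomp d_gt0 b y; have [x lt_xd <-] := sigma_onto lt_vd.
  by exists (b + x%:Z + t * d%:Z); rewrite block_permE.
split; last split=> //.
  exists (fun y => xchoose (onto y)) => [i|y]; last exact/eqP/(xchooseP (onto y)).
  by apply: inj; apply/eqP/(xchooseP (onto (block_perm i))).
have sum_sigma : \sum_(x < d) (sigma x)%:Z = \sum_(x < d) x%:Z.
  rewrite -(big_mkord xpredT (fun x => (sigma x)%:Z)) -(big_mkord xpredT (fun x => x%:Z)).
  by rewrite /index_iota subn0 -(big_map sigma xpredT (fun v => v%:Z)); apply: perm_big.
have per0 i : block_perm (i + d%:Z) - (i + d%:Z) = block_perm i - i by rewrite per; lia.
rewrite -(sum_shift_periodic d_gt0 per0 b) -[RHS](subrr (\sum_(x < d) x%:Z)).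
rewrite -[X in X - _]sum_sigma -sumrB; apply: eq_bigr => x _.
by have := block_permE 0 (ltn_ord x); rewrite mul0r !addr0 => ->; lia.
Qed.

Lemma block_perm_avoids312 :
  (forall x y z, (x < y)%N -> (y < z)%N -> ~ ((sigma y < sigma z)%N /\ (sigma z < sigma x)%N)) ->
  avoids312 block_perm.
Proof.
move=> sigma_avoids [i [j [k []]]].
have [x [s [lt_xd ->]]] := block_decomp d_gt0 b i.
have [y [t [lt_yd ->]]] := block_decomp d_gt0 b j.
have [z [u [lt_zd ->]]] := block_decomp d_gt0 b k.
rewrite !block_permE // => lt_ij lt_jk lt_jk' lt_ki.
have le_st := @block_index_le d d_gt0 x y s t lt_xd lt_yd ltac:(lia).
have le_tu := @block_index_le d d_gt0 y z t u lt_yd lt_zd ltac:(lia).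
have le_us := @block_index_le d d_gt0 _ _ u s (sigma_lt lt_zd) (sigma_lt lt_xd) ltac:(lia).
have [eq_st eq_tu] : s = t /\ t = u by lia.
apply: (sigma_avoids x y z); rewrite -?(ltz_nat (sigma _)); lia.
Qed.

Lemma block_perm_prefix_max (x m : nat) (t : int) : (x < d)%N ->
  (forall y, (y <= x)%N -> (sigma y <= m)%N) -> (exists2 y, (y <= x)%N & sigma y = m) ->
  prefix_max d block_perm (b + x%:Z + t * d%:Z) = b + m%:Z + t * d%:Z.
Proof.
move=> lt_xd le_m [y0 le_y0x eq_m]; apply: (prefix_max_eq d_gt0 block_perm_aff).
  move=> i; have [y [s [lt_yd ->]]] := block_decomp d_gt0 b i; rewrite block_permE // => le_i.
  have le_st := @block_index_le d d_gt0 y x s t lt_yd lt_xd ltac:(lia).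
  have [lt_st|eq_st] : s < t \/ s = t by lia.
    by have := sigma_lt lt_yd; nia.
  by rewrite eq_st; have := le_m y ltac:(lia); lia.
by exists (b + y0%:Z + t * d%:Z); rewrite ?block_permE ?eq_m //; [lia | apply: leq_ltn_trans lt_xd].
Qed.
End BlockPermutation.

(** * The cut code *)

Definition affine_ext (w : seq int) (i : int) : int :=
  w`_(absz (i %% size w)%Z) + (i %/ size w)%Z * (size w)%:Z.

Lemma size_window d p : size (window d p) = d.
Proof. by rewrite size_map size_iota. Qed.

Lemma affine_ext_window d p :
  (0 < d)%N -> is_affine_perm d p -> affine_ext (window d p) =1 p.
Proof.
move=> d_gt0 p_aff i; rewrite /affine_ext size_window.
rewrite (nth_map 0%N) ?size_iota ?nth_iota /=; try lia.
rewrite add0n -(affine_permZ p_aff); congr p; lia.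
Qed.

(* [prefix_gap] is [g] and [cut_code] is [e], in the notation of the sketch at the top. *)
Definition prefix_gap (d : nat) (p : int -> int) (j : nat) : nat :=
  absz (prefix_max d p j%:Z - j%:Z).

Definition cut_code (d : nat) (p : int -> int) : seq nat :=
  lindley_increments (prefix_gap d p) d.

Definition window_code (w : seq int) : seq nat := cut_code (size w) (affine_ext w).

Lemma eq_prefix_max d (p q : int -> int) : p =1 q -> prefix_max d p =1 prefix_max d q.
Proof. by move=> eq_pq j; rewrite /prefix_max eq_pq; apply: eq_bigr => x _; rewrite eq_pq. Qed.

Lemma eq_cut_code d (p q : int -> int) : p =1 q -> cut_code d p = cut_code d q.
Proof.
move=> eq_pq; rewrite /cut_code /lindley_increments /prefix_gap.
by apply: eq_map => j; rewrite !(eq_prefix_max d eq_pq).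
Qed.

Section CutCode.
Variables (d : nat) (p : int -> int).
Hypothesis d_gt0 : (0 < d)%N.
Hypothesis p_aff : is_affine_perm d p.

Lemma prefix_gapE j : (prefix_gap d p j)%:Z = prefix_max d p j%:Z - j%:Z.
Proof. by have := prefix_max_ge d_gt0 p_aff j%:Z; rewrite /prefix_gap; lia. Qed.

Lemma prefix_gap_eq0 (j : nat) : prefix_gap d p j = 0%N <-> is_cut_point p j%:Z.
Proof. by rewrite (cut_pointE d_gt0 p_aff); have := prefix_gapE j; split; lia. Qed.

Lemma prefix_gap_step j : ((prefix_gap d p j).-1 <= prefix_gap d p j.+1)%N.
Proof.
have := prefix_gapE j; have := prefix_gapE j.+1.
have := @le_prefix_max d p d_gt0 p_aff j%:Z j.+1%:Z ltac:(lia); lia.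
Qed.

Lemma prefix_gap_period : prefix_gap d p d = prefix_gap d p 0.
Proof.
have := prefix_maxZ d_gt0 p_aff 0%:Z 1; rewrite add0r mul1r.
by have := prefix_gapE d; have := prefix_gapE 0; lia.
Qed.

Lemma lindley_cut_code j : (j <= d)%N ->
  lindley (cut_code d p) (prefix_gap d p 0) j = prefix_gap d p j.
Proof. by apply: lindley_incrementsK => i _; apply: prefix_gap_step. Qed.

Lemma cut_code_period : lindley (cut_code d p) (prefix_gap d p 0) d = prefix_gap d p 0.
Proof. by rewrite lindley_cut_code // prefix_gap_period. Qed.

Lemma size_cut_code : size (cut_code d p) = d.
Proof. by rewrite size_map size_iota. Qed.

Lemma lindley_zeros_cut_code k :
  has_cut_classes d p k -> lindley_zeros (cut_code d p) (prefix_gap d p 0) d = k.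
Proof.
case=> S [<- mem_S]; rewrite /lindley_zeros big_mkord -sum1_card [RHS]big_mkcond /=.
apply: eq_bigr => j _; rewrite lindley_cut_code 1?ltnW //.
have := mem_S j; rewrite -prefix_gap_eq0 => mem_j.
have [/mem_j ->|j_notin] // := boolP (j \in S).
by case: eqP => // /mem_j; rewrite (negbTE j_notin).
Qed.

Lemma cut_code_compositions k :
  has_cut_classes d p k -> cut_code d p \in compositions d (d - k).
Proof.
move=> cuts_k; rewrite mem_compositions size_cut_code eqxx /=.
have := lindley_balance (cut_code d p) (prefix_gap d p 0) d.
have -> : \sum_(0 <= j < d) nth 0 (cut_code d p) j = sumn (cut_code d p).
  by rewrite sumnE [RHS](big_nth 0) size_cut_code.
by rewrite cut_code_period (lindley_zeros_cut_code cuts_k) => balance; apply/eqP; lia.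
Qed.

Lemma has_cut_point k : (0 < k)%N -> has_cut_classes d p k ->
  exists2 j, (j < d)%N & prefix_gap d p j = 0%N.
Proof.
move=> k_gt0 [S [card_S mem_S]]; have /card_gt0P[j j_S] : (0 < #|S|)%N by rewrite card_S.
by exists j => //; apply/prefix_gap_eq0/mem_S.
Qed.
End CutCode.

Lemma cut_code_inj d (p q : int -> int) :
  (0 < d)%N -> is_affine_perm d p -> is_affine_perm d q -> avoids312 p -> avoids312 q ->
  (exists2 j, (j < d)%N & prefix_gap d p j = 0%N) ->
  (exists2 j, (j < d)%N & prefix_gap d q j = 0%N) ->
  cut_code d p = cut_code d q -> p =1 q.
Proof.
move=> d_gt0 p_aff q_aff avoid_p avoid_q [c lt_cd cut_c] [c' lt_c'd cut_c'] eq_code.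
have eq_gap0 : prefix_gap d p 0 = prefix_gap d q 0.
  apply: (@lindley_periodic_uniq (cut_code d p) _ _ d).
  - exact: cut_code_period.
  - by rewrite eq_code; apply: cut_code_period.
  - by exists c; rewrite ?lindley_cut_code // ltnW.
  - by exists c'; rewrite ?eq_code ?lindley_cut_code // ltnW.
have eq_max j : prefix_max d p j = prefix_max d q j.
  have [x [t [lt_xd ->]]] := block_decomp d_gt0 0 j; rewrite add0r !prefix_maxZ //.
  have := prefix_gapE d_gt0 p_aff x; have := prefix_gapE d_gt0 q_aff x.
  rewrite -(lindley_cut_code d_gt0 p_aff (ltnW lt_xd)).
  by rewrite -(lindley_cut_code d_gt0 q_aff (ltnW lt_xd)) eq_code eq_gap0; lia.
apply: (avoids312_eq_of_prefix_max d_gt0 p_aff q_aff avoid_p avoid_q _ eq_max).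
exact/prefix_gap_eq0/cut_c.
Qed.

(** * Every composition is a cut code *)

Section CutCodeOnto.
Variables (d k : nat) (r : seq nat) (x0 c0 : nat).
Hypothesis size_r : size r = d.
Hypothesis x0_period : lindley r x0 d = x0.
Hypothesis x0_zeros : lindley_zeros r x0 d = k.
Hypothesis lt_c0d : (c0 < d)%N.
Hypothesis c0_zero : lindley r x0 c0 = 0%N.

Let d_gt0 : (0 < d)%N := leq_ltn_trans (leq0n c0) lt_c0d.

(* The periodic extension of the trajectory, the intended [prefix_gap]. *)
Definition target_gap (j : nat) : nat := lindley r x0 (j %% d).

Lemma target_gap_period j : target_gap (j + d) = target_gap j.
Proof. by rewrite /target_gap modnDr. Qed.

Lemma target_gap_step j : target_gap j.+1 = ((target_gap j).-1 + nth 0 r (j %% d))%N.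
Proof.
rewrite /target_gap -addn1 -modnDml addn1.
have := ltn_pmod j d_gt0; rewrite leq_eqVlt => /orP[/eqP eq_d|lt_j1d].
  by rewrite eq_d modnn /= -{1}x0_period -{1}eq_d.
by rewrite modn_small.
Qed.

(* Blocks start right after the cut point [c0]; [block_bound y] is the
   intended prefix maximum at position [y] of the block. *)
Definition block_bound (y : nat) : nat := (y + target_gap (c0.+1 + y))%N.

Lemma block_bound_ge y : (y <= block_bound y)%N.
Proof. exact: leq_addr. Qed.

Lemma block_bound_mono : {homo block_bound : y z / (y <= z)%N}.
Proof.
apply: homo_leq => [||y]; [exact: leqnn | exact: leq_trans |].
by rewrite /block_bound addnS target_gap_step; lia.
Qed.

Lemma block_bound_lt y : (y < d)%N -> (block_bound y < d)%N.
Proof.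
have bound_last : block_bound d.-1 = d.-1.
  rewrite /block_bound addSn -addnS prednK // target_gap_period.
  by rewrite /target_gap modn_small // c0_zero addn0.
by move=> lt_yd; have := @block_bound_mono y d.-1 ltac:(lia); rewrite bound_last; lia.
Qed.

Definition code_perm : int -> int := block_perm d c0.+1%:Z (greedy block_bound).

Let sigma_perm : perm_eq (mkseq (greedy block_bound) d) (iota 0 d) :=
  greedy_perm block_bound_ge block_bound_lt.

Lemma code_perm_aff : is_affine_perm d code_perm.
Proof. exact: block_perm_aff. Qed.

Lemma code_perm_avoids312 : avoids312 code_perm.
Proof.
exact: (block_perm_avoids312 d_gt0 sigma_perm (greedy_no312 block_bound_ge block_bound_mono)).
Qed.

Lemma code_perm_prefix_max (j : nat) : (j <= d)%N ->
  prefix_max d code_perm j%:Z = (j + target_gap j)%:Z.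
Proof.
move=> le_jd.
have [x [t [lt_xd j_eq gap_eq]]] : exists x (t : int), [/\ (x < d)%N,
    j%:Z = c0.+1%:Z + x%:Z + t * d%:Z & target_gap j = target_gap (c0.+1 + x)].
  have [lt_c0j|le_jc0] := ltnP c0 j.
    by exists (j - c0.+1)%N, 0; rewrite mul0r addr0 subnKC //; split=> //; lia.
  exists (j + d - c0.+1)%N, (-1); rewrite subnKC; last lia.
  by rewrite target_gap_period; split=> //; lia.
have [le_bound [y le_yx eq_y]] := greedy_prefix_max block_bound_ge block_bound_mono x.
rewrite j_eq (block_perm_prefix_max _ d_gt0 sigma_perm t lt_xd le_bound).
  by rewrite gap_eq /block_bound; lia.
by exists y.
Qed.

Lemma code_perm_gap j : (j <= d)%N -> prefix_gap d code_perm j = target_gap j.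
Proof. by move=> le_jd; rewrite /prefix_gap code_perm_prefix_max //; lia. Qed.

Lemma code_perm_code : cut_code d code_perm = r.
Proof.
apply: (@eq_from_nth _ 0%N); rewrite size_cut_code ?size_r // => j lt_jd.
rewrite (nth_map 0%N) ?size_iota // nth_iota // add0n.
by rewrite (code_perm_gap lt_jd) (code_perm_gap (ltnW lt_jd)) target_gap_step modn_small ?addKn.
Qed.

Lemma code_perm_cuts : has_cut_classes d code_perm k.
Proof.
exists [set j : 'I_d | lindley r x0 j == 0%N]; split=> [|j].
  rewrite -x0_zeros /lindley_zeros big_mkord -sum1_card [LHS]big_mkcond /=.
  by apply: eq_bigr => j _; rewrite inE; case: eqP.
rewrite inE -(prefix_gap_eq0 d_gt0 code_perm_aff) code_perm_gap 1?ltnW //.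
by rewrite /target_gap modn_small //; split=> /eqP.
Qed.
End CutCodeOnto.

Lemma cut_code_onto d k r : (0 < k <= d)%N -> r \in compositions d (d - k) ->
  exists p, [/\ is_affine_perm d p, avoids312 p, has_cut_classes d p k & cut_code d p = r].
Proof.
move=> k_range; rewrite mem_compositions => /andP[/eqP size_r /eqP sum_r].
have [x0 [x0_period x0_zeros]] := lindley_periodic_exists size_r sum_r k_range.
have [c0 lt_c0d c0_zero] : exists2 c0, (c0 < d)%N & lindley r x0 c0 = 0%N.
  case: (pickP [pred j : 'I_d | lindley r x0 j == 0%N]) => [j /eqP|no_zero].
    by exists j.
  move: k_range; rewrite -x0_zeros /lindley_zeros big_mkord big1 // => j _.
  by have /= -> := no_zero j.
exists (code_perm d r x0 c0); split.
- exact: code_perm_aff size_r x0_period x0_zeros lt_c0d c0_zero.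
- exact: code_perm_avoids312 size_r x0_period x0_zeros lt_c0d c0_zero.
- exact: code_perm_cuts size_r x0_period x0_zeros lt_c0d c0_zero.
- exact: code_perm_code size_r x0_period x0_zeros lt_c0d c0_zero.
Qed.

Lemma window_code_window d p : (0 < d)%N -> is_affine_perm d p ->
  window_code (window d p) = cut_code d p.
Proof.
by move=> d_gt0 p_aff; rewrite /window_code size_window; apply/eq_cut_code/affine_ext_window.
Qed.

Lemma size_compositions_cuts d k : (0 < k <= d)%N ->
  size (compositions d (d - k)) = 'C(2 * d - k - 1, d - 1).
Proof.
case: d => [|d /andP[k_gt0 le_kd]]; first by case: k.
have -> : (2 * d.+1 - k - 1 = (d.+1 - k) + d)%N by lia.
by rewrite size_compositions subn1 /= -[in RHS]bin_sub ?leq_addl // addnK.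
Qed.

Theorem theorem4p2 (d k : nat) (hk : (0 < k)%N) (hkd : (k <= d)%N) :
  exists s : seq (seq int),
    [/\ uniq s,
        size s = 'C(2 * d - k - 1, d - 1)
      & forall w : seq int,
          w \in s <->
          exists p : int -> int,
            [/\ is_affine_perm d p, avoids312 p, has_cut_classes d p k
              & w = window d p]].
Proof.
have d_gt0 : (0 < d)%N by apply: leq_trans hkd.
have k_range : (0 < k <= d)%N by rewrite hk.
have [|||s [s_uniq size_s mem_s]] := @enum_by_encoding _ _
  (fun w => exists p, [/\ is_affine_perm d p, avoids312 p, has_cut_classes d p k
                        & w = window d p])
  window_code (compositions d (d - k)) (compositions_uniq d (d - k)).
- move=> _ [p [p_aff _ cuts ->]].
  by rewrite window_code_window // (cut_code_compositions d_gt0 p_aff).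
- move=> r /(cut_code_onto k_range) [p [p_aff avoid cuts <-]].
  by exists (window d p); [exists p | rewrite window_code_window].
- move=> _ _ [p [p_aff avoid_p cuts_p ->]] [q [q_aff avoid_q cuts_q ->]].
  rewrite !window_code_window // => eq_code.
  apply: eq_map => i; apply: (cut_code_inj d_gt0 p_aff q_aff avoid_p avoid_q _ _ eq_code).
    exact: (has_cut_point d_gt0 p_aff hk cuts_p).
  exact: (has_cut_point d_gt0 q_aff hk cuts_q).
by exists s; rewrite size_s size_compositions_cuts.
Qed.
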